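(* Let $(D,T,K,v,k,v_0)$ be a warping on a bicategory $\mathcal B$ (so $v,k,v_0$ are invertible), and let $(A,E,e,e_0)$ be data as in the definition of an algebra below in which all components of $e$ and $e_0$ are invertible. If axioms (A1) and (A2) hold, then axiom (A3) holds.
   Context: Notation: for 1-cells write $g\cdot f$ for composite, $1$ for identities, $\theta\cdot f$ for whiskering; $\alpha$, $\lambda$, $\rho$ denote the associativity and unit constraints of the bicategory ($\alpha\colon(h\cdot g)\cdot f\to h\cdot(g\cdot f)$, $\lambda\colon1\cdot f\to f$, $\rho\colon f\to f\cdot 1$, all invertible). A warping on a bicategory $\mathcal B$: a function $D$ on objects; functors $T\colon\mathcal B(X,DY)\to\mathcal B(DX,DY)$; 1-cells $K_X\colon X\to DX$; natural invertible 2-cells $v_{g,f}\colon T(Tg\cdot f)\to Tg\cdot Tf$ ($f\colon X\to DY$, $g\colon Y\to DZ$), $k_f\colon f\to Tf\cdot K_X$, and invertible 2-cells $v_{0,Y}\colon TK_Y\to 1_{DY}$, such that for all $f\colon X\to DY$, $g\colon Y\to DZ$, $h\colon Z\to DW$: (W1) $\alpha\circ(v_{h,g}\cdot Tf)\circ v_{Th\cdot g,f}=(Th\cdot v_{g,f})\circ v_{h,Tg\cdot f}\circ T(\alpha)\circ T(v_{h,g}\cdot f)$; (W2) $(Tf\cdot v_{0,X})\circ v_{f,K_X}\circ T(k_f)=\rho_{Tf}$; (W3) $\lambda_{Tf}\circ(v_{0,Y}\cdot Tf)\circ v_{K_Y,f}=T(\lambda_f)\circ T(v_{0,Y}\cdot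 f)$; (W4) $\alpha\circ(v_{g,f}\cdot K_X)\circ k_{Tg\cdot f}=Tg\cdot k_f$; (W5) $\lambda_{K_X}\circ(v_{0,X}\cdot K_X)\circ k_{K_X}=1_{K_X}$. An algebra for the warping consists of an object $A$, functors $E\colon\mathcal B(X,A)\to\mathcal B(DX,A)$ for each $X$, and natural 2-cells $e=e_{a,x}\colon E(Ea\cdot x)\to Ea\cdot Tx$ (for $a\colon Y\to A$, $x\colon X\to DY$) and $e_0=e_{0,a}\colon a\to Ea\cdot K_Y$ (for $a\colon Y\to A$), subject to, for $a\colon Y\to A$, $x\colon X\to DY$, $y\colon W\to DX$: (A1) $\alpha\circ(e_{a,x}\cdot Ty)\circ e_{Ea\cdot x,y}=(Ea\cdot v_{x,y})\circ e_{a,Tx\cdot y}\circ E(\alpha)\circ E(e_{a,x}\cdot y)$ as 2-cells $E(E(Ea\cdot x)\cdot y)\to Ea\cdot(Tx\cdot Ty)$; (A2) $(Ea\cdot v_{0,Y})\circ e_{a,K_Y}\circ E(e_{0,a})=\rho_{Ea}\colon Ea\to Ea\cdot 1$; (A3) $\alpha\circ(e_{a,x}\cdot K_X)\circ e_{0,Ea\cdot x}=Ea\cdot k_x\colon Ea\cdot x\to Ea\cdot(Tx\cdot K_X)$. *)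

Record bicat_data := {
  ob : Type;
  hom : ob -> ob -> Type;
  cell : forall a b : ob, hom a b -> hom a b -> Type;
  id1 : forall a : ob, hom a a;
  (* comp1 g f  is the composite  g . f  (first f, then g) *)
  comp1 : forall a b c : ob, hom b c -> hom a b -> hom a c;
  id2 : forall (a b : ob) (f : hom a b), cell a b f f;
  (* vcomp th ph  is  th o ph  (first ph, then th) *)
  vcomp : forall (a b : ob) (f g h : hom a b), cell a b g h -> cell a b f g -> cell a b f h;
  lwhisk : forall (a b c : ob) (h : hom b c) (f g : hom a b),
      cell a b f g -> cell a c (comp1 a b c h f) (comp1 a b c h g);
  rwhisk : forall (a b c : ob) (f g : hom b c),
      cell b c f g -> forall h : hom a b, cell a c (comp1 a b c f h) (comp1 a b c g h);
  assoc : forall (a b c d : ob) (h : hom c d) (g : hom b c) (f : hom a b),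
      cell a d (comp1 a b d (comp1 b c d h g) f) (comp1 a c d h (comp1 a b c g f));
  assoc_inv : forall (a b c d : ob) (h : hom c d) (g : hom b c) (f : hom a b),
      cell a d (comp1 a c d h (comp1 a b c g f)) (comp1 a b d (comp1 b c d h g) f);
  lunit : forall (a b : ob) (f : hom a b), cell a b (comp1 a b b (id1 b) f) f;
  lunit_inv : forall (a b : ob) (f : hom a b), cell a b f (comp1 a b b (id1 b) f);
  (* rho : f -> f.1 *)
  runit : forall (a b : ob) (f : hom a b), cell a b f (comp1 a a b f (id1 a));
  runit_inv : forall (a b : ob) (f : hom a b), cell a b (comp1 a a b f (id1 a)) f
}.

Arguments hom {B} : rename.
Arguments cell {B a b} : rename.
Arguments id1 {B} a : rename.
Arguments comp1 {B a b c} : rename.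
Arguments id2 {B a b} f : rename.
Arguments vcomp {B a b f g h} : rename.
Arguments lwhisk {B a b c} h {f g} : rename.
Arguments rwhisk {B a b c f g} _ h : rename.
Arguments assoc {B a b c d} h g f : rename.
Arguments assoc_inv {B a b c d} h g f : rename.
Arguments lunit {B a b} f : rename.
Arguments lunit_inv {B a b} f : rename.
Arguments runit {B a b} f : rename.
Arguments runit_inv {B a b} f : rename.

Declare Scope bicat_scope.
Delimit Scope bicat_scope with bc.
Open Scope bicat_scope.

Notation "g · f" := (comp1 g f) (at level 38, left associativity) : bicat_scope.
Notation "h ◃ θ" := (lwhisk h θ) (at level 40, no associativity) : bicat_scope.
Notation "θ ▹ f" := (rwhisk θ f) (at level 40, no associativity) : bicat_scope.
Notation "θ ∘ φ" := (vcomp θ φ) (at level 50, left associativity) : bicat_scope.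

Record is_bicat (B : bicat_data) : Prop := {
  vcomp_assoc : forall (a b : ob B) (f g h k : hom a b)
      (x : cell h k) (y : cell g h) (z : cell f g), x ∘ (y ∘ z) = (x ∘ y) ∘ z;
  id2_left : forall (a b : ob B) (f g : hom a b) (x : cell f g), id2 g ∘ x = x;
  id2_right : forall (a b : ob B) (f g : hom a b) (x : cell f g), x ∘ id2 f = x;
  lwhisk_id2 : forall (a b c : ob B) (h : hom b c) (f : hom a b), h ◃ id2 f = id2 (h · f);
  id2_rwhisk : forall (a b c : ob B) (f : hom b c) (h : hom a b), id2 f ▹ h = id2 (f · h);
  lwhisk_vcomp : forall (a b c : ob B) (h : hom b c) (f g k : hom a b)
      (x : cell g k) (y : cell f g), (h ◃ x) ∘ (h ◃ y) = h ◃ (x ∘ y);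
  rwhisk_vcomp : forall (a b c : ob B) (f g k : hom b c) (h : hom a b)
      (x : cell g k) (y : cell f g), (x ▹ h) ∘ (y ▹ h) = (x ∘ y) ▹ h;
  vcomp_whisk : forall (a b c : ob B) (f f' : hom b c) (g g' : hom a b)
      (x : cell f f') (y : cell g g'), (f' ◃ y) ∘ (x ▹ g) = (x ▹ g') ∘ (f ◃ y);
  assoc_nat_l : forall (a b c d : ob B) (h h' : hom c d) (g : hom b c) (f : hom a b)
      (x : cell h h'), assoc h' g f ∘ ((x ▹ g) ▹ f) = (x ▹ (g · f)) ∘ assoc h g f;
  assoc_nat_m : forall (a b c d : ob B) (h : hom c d) (g g' : hom b c) (f : hom a b)
      (x : cell g g'), assoc h g' f ∘ ((h ◃ x) ▹ f) = (h ◃ (x ▹ f)) ∘ assoc h g f;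
  assoc_nat_r : forall (a b c d : ob B) (h : hom c d) (g : hom b c) (f f' : hom a b)
      (x : cell f f'), assoc h g f' ∘ ((h · g) ◃ x) = (h ◃ (g ◃ x)) ∘ assoc h g f;
  lunit_nat : forall (a b : ob B) (f f' : hom a b) (x : cell f f'),
      lunit f' ∘ (id1 b ◃ x) = x ∘ lunit f;
  runit_nat : forall (a b : ob B) (f f' : hom a b) (x : cell f f'),
      runit f' ∘ x = (x ▹ id1 a) ∘ runit f;
  assoc_inv_l : forall (a b c d : ob B) (h : hom c d) (g : hom b c) (f : hom a b),
      assoc_inv h g f ∘ assoc h g f = id2 ((h · g) · f);
  assoc_inv_r : forall (a b c d : ob B) (h : hom c d) (g : hom b c) (f : hom a b),
      assoc h g f ∘ assoc_inv h g f = id2 (h · (g · f));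
  lunit_inv_l : forall (a b : ob B) (f : hom a b), lunit_inv f ∘ lunit f = id2 (id1 b · f);
  lunit_inv_r : forall (a b : ob B) (f : hom a b), lunit f ∘ lunit_inv f = id2 f;
  runit_inv_l : forall (a b : ob B) (f : hom a b), runit_inv f ∘ runit f = id2 f;
  runit_inv_r : forall (a b : ob B) (f : hom a b), runit f ∘ runit_inv f = id2 (f · id1 a);
  pentagon : forall (a b c d e : ob B) (k : hom d e) (h : hom c d) (g : hom b c) (f : hom a b),
      assoc k h (g · f) ∘ assoc (k · h) g f
      = (k ◃ assoc h g f) ∘ assoc k (h · g) f ∘ (assoc k h g ▹ f);
  triangle : forall (a b c : ob B) (g : hom b c) (f : hom a b),
      (g ◃ lunit f) ∘ assoc g (id1 b) f ∘ (runit g ▹ f) = id2 (g · f)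
}.

Record bicat := {
  bc_data :> bicat_data;
  bc_laws : is_bicat bc_data
}.

Definition is_invertible {B : bicat_data} {a b : ob B} {f g : hom a b} (x : cell f g) : Prop :=
  exists y : cell g f, y ∘ x = id2 f /\ x ∘ y = id2 g.

Record warping (B : bicat) := {
  wD : ob B -> ob B;
  wT : forall X Y : ob B, hom X (wD Y) -> hom (wD X) (wD Y);
  wT2 : forall (X Y : ob B) (f g : hom X (wD Y)), cell f g -> cell (wT X Y f) (wT X Y g);
  wT2_id : forall (X Y : ob B) (f : hom X (wD Y)), wT2 X Y f f (id2 f) = id2 (wT X Y f);
  wT2_comp : forall (X Y : ob B) (f g h : hom X (wD Y)) (x : cell g h) (y : cell f g),
      wT2 X Y f h (x ∘ y) = wT2 X Y g h x ∘ wT2 X Y f g y;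
  wK : forall X : ob B, hom X (wD X);
  wv : forall (X Y Z : ob B) (g : hom Y (wD Z)) (f : hom X (wD Y)),
      cell (wT X Z (wT Y Z g · f)) (wT Y Z g · wT X Y f);
  wv_nat_g : forall (X Y Z : ob B) (g g' : hom Y (wD Z)) (f : hom X (wD Y)) (x : cell g g'),
      wv X Y Z g' f ∘ wT2 X Z _ _ (wT2 Y Z g g' x ▹ f)
      = (wT2 Y Z g g' x ▹ wT X Y f) ∘ wv X Y Z g f;
  wv_nat_f : forall (X Y Z : ob B) (g : hom Y (wD Z)) (f f' : hom X (wD Y)) (x : cell f f'),
      wv X Y Z g f' ∘ wT2 X Z _ _ (wT Y Z g ◃ x)
      = (wT Y Z g ◃ wT2 X Y f f' x) ∘ wv X Y Z g f;
  wv_inv : forall (X Y Z : ob B) (g : hom Y (wD Z)) (f : hom X (wD Y)),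
      is_invertible (wv X Y Z g f);
  wk : forall (X Y : ob B) (f : hom X (wD Y)), cell f (wT X Y f · wK X);
  wk_nat : forall (X Y : ob B) (f f' : hom X (wD Y)) (x : cell f f'),
      wk X Y f' ∘ x = (wT2 X Y f f' x ▹ wK X) ∘ wk X Y f;
  wk_inv : forall (X Y : ob B) (f : hom X (wD Y)), is_invertible (wk X Y f);
  wv0 : forall Y : ob B, cell (wT Y Y (wK Y)) (id1 (wD Y));
  wv0_inv : forall Y : ob B, is_invertible (wv0 Y);
  W1 : forall (X Y Z W : ob B) (f : hom X (wD Y)) (g : hom Y (wD Z)) (h : hom Z (wD W)),
      assoc _ _ _ ∘ (wv Y Z W h g ▹ wT X Y f) ∘ wv X Y W (wT Z W h · g) f
      = (wT Z W h ◃ wv X Y Z g f) ∘ wv X Z W h (wT Y Z g · f)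
        ∘ wT2 X W _ _ (assoc _ _ _) ∘ wT2 X W _ _ (wv Y Z W h g ▹ f);
  W2 : forall (X Y : ob B) (f : hom X (wD Y)),
      (wT X Y f ◃ wv0 X) ∘ wv X X Y f (wK X) ∘ wT2 X Y _ _ (wk X Y f) = runit (wT X Y f);
  W3 : forall (X Y : ob B) (f : hom X (wD Y)),
      lunit (wT X Y f) ∘ (wv0 Y ▹ wT X Y f) ∘ wv X Y Y (wK Y) f
      = wT2 X Y _ _ (lunit f) ∘ wT2 X Y _ _ (wv0 Y ▹ f);
  W4 : forall (X Y Z : ob B) (f : hom X (wD Y)) (g : hom Y (wD Z)),
      assoc _ _ _ ∘ (wv X Y Z g f ▹ wK X) ∘ wk X Z (wT Y Z g · f)
      = wT Y Z g ◃ wk X Y f;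
  W5 : forall X : ob B,
      lunit (wK X) ∘ (wv0 X ▹ wK X) ∘ wk X X (wK X) = id2 (wK X)
}.

Arguments wD {B} w _ : rename.
Arguments wT {B} w {X Y} _ : rename.
Arguments wT2 {B} w {X Y f g} _ : rename.
Arguments wK {B} w X : rename.
Arguments wv {B} w {X Y Z} g f : rename.
Arguments wk {B} w {X Y} f : rename.
Arguments wv0 {B} w Y : rename.

Record alg_data {B : bicat} (w : warping B) := {
  aA : ob B;
  aE : forall X : ob B, hom X aA -> hom (wD w X) aA;
  aE2 : forall (X : ob B) (a b : hom X aA), cell a b -> cell (aE X a) (aE X b);
  aE2_id : forall (X : ob B) (a : hom X aA), aE2 X a a (id2 a) = id2 (aE X a);
  aE2_comp : forall (X : ob B) (a b c : hom X aA) (x : cell b c) (y : cell a b),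
      aE2 X a c (x ∘ y) = aE2 X b c x ∘ aE2 X a b y;
  ae : forall (X Y : ob B) (a : hom Y aA) (x : hom X (wD w Y)),
      cell (aE X (aE Y a · x)) (aE Y a · wT w x);
  ae_nat_a : forall (X Y : ob B) (a a' : hom Y aA) (x : hom X (wD w Y)) (s : cell a a'),
      ae X Y a' x ∘ aE2 X _ _ (aE2 Y a a' s ▹ x) = (aE2 Y a a' s ▹ wT w x) ∘ ae X Y a x;
  ae_nat_x : forall (X Y : ob B) (a : hom Y aA) (x x' : hom X (wD w Y)) (s : cell x x'),
      ae X Y a x' ∘ aE2 X _ _ (aE Y a ◃ s) = (aE Y a ◃ wT2 w s) ∘ ae X Y a x;
  ae0 : forall (Y : ob B) (a : hom Y aA), cell a (aE Y a · wK w Y);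
  ae0_nat : forall (Y : ob B) (a a' : hom Y aA) (s : cell a a'),
      ae0 Y a' ∘ s = (aE2 Y a a' s ▹ wK w Y) ∘ ae0 Y a
}.

Arguments aA {B w} _ : rename.
Arguments aE {B w} _ {X} _ : rename.
Arguments aE2 {B w} _ {X a b} _ : rename.
Arguments ae {B w} _ {X Y} a x : rename.
Arguments ae0 {B w} _ {Y} a : rename.

Definition alg_A1 {B : bicat} {w : warping B} (Al : alg_data w) : Prop :=
  forall (W X Y : ob B) (a : hom Y (aA Al)) (x : hom X (wD w Y)) (y : hom W (wD w X)),
    assoc _ _ _ ∘ (ae Al a x ▹ wT w y) ∘ ae Al (aE Al a · x) y
    = (aE Al a ◃ wv w x y) ∘ ae Al a (wT w x · y)
      ∘ aE2 Al (assoc _ _ _) ∘ aE2 Al (ae Al a x ▹ y).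

Definition alg_A2 {B : bicat} {w : warping B} (Al : alg_data w) : Prop :=
  forall (Y : ob B) (a : hom Y (aA Al)),
    (aE Al a ◃ wv0 w Y) ∘ ae Al a (wK w Y) ∘ aE2 Al (ae0 Al a) = runit (aE Al a).

Definition alg_A3 {B : bicat} {w : warping B} (Al : alg_data w) : Prop :=
  forall (X Y : ob B) (a : hom Y (aA Al)) (x : hom X (wD w Y)),
    assoc _ _ _ ∘ (ae Al a x ▹ wK w X) ∘ ae0 Al (aE Al a · x) = aE Al a ◃ wk w x.

(* Since e_0 has invertible components, E is faithful on 2-cells, so it suffices to prove
   E applied to both sides of (A3) agree after post-composing the invertible cell
   (Ea ◃ (Tx ◃ v_0)) ∘ (Ea ◃ v_{x,K}) ∘ e_{a,Tx·K}.  On the right, (W2) turns the result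
   into α ∘ ρ ∘ e_{a,x}; on the left, (A1) at y = K followed by (A2) at Ea·x gives the same. *)
From Corelib Require Import ssreflect.

Section BicategoryFacts.
Variable B : bicat.
Let L := bc_laws B.

Lemma vcompA {a b : ob B} {f g h k : hom a b} (x : cell h k) (y : cell g h) (z : cell f g) :
  x ∘ (y ∘ z) = x ∘ y ∘ z.
Proof. exact: (vcomp_assoc _ L). Qed.

Lemma id2_vcomp {a b : ob B} {f g : hom a b} (x : cell f g) : id2 g ∘ x = x.
Proof. exact: (id2_left _ L). Qed.

Lemma vcomp_id2 {a b : ob B} {f g : hom a b} (x : cell f g) : x ∘ id2 f = x.
Proof. exact: (id2_right _ L). Qed.

Lemma invertible_cancel_l {a b : ob B} {f g h : hom a b} (x : cell g h) (p q : cell f g) :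
  is_invertible x -> x ∘ p = x ∘ q -> p = q.
Proof.
move=> [y [yx _]] xp_xq.
by rewrite -(id2_vcomp p) -(id2_vcomp q) -yx -!vcompA xp_xq.
Qed.

Lemma vcomp_invertible {a b : ob B} {f g h : hom a b} (x : cell g h) (y : cell f g) :
  is_invertible x -> is_invertible y -> is_invertible (x ∘ y).
Proof.
move=> [x' [x'x xx']] [y' [y'y yy']]; exists (y' ∘ x'); split.
- by rewrite !vcompA -(vcompA y' x' x) x'x vcomp_id2 y'y.
- by rewrite !vcompA -(vcompA x y y') yy' vcomp_id2 xx'.
Qed.

Lemma lwhisk_invertible {a b c : ob B} (h : hom b c) {f g : hom a b} (x : cell f g) :
  is_invertible x -> is_invertible (h ◃ x).
Proof.
move=> [x' [x'x xx']]; exists (h ◃ x').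
by split; rewrite (lwhisk_vcomp _ L) ?x'x ?xx' (lwhisk_id2 _ L).
Qed.

Lemma assoc_invertible {a b c d : ob B} (h : hom c d) (g : hom b c) (f : hom a b) :
  is_invertible (assoc h g f).
Proof. by exists (assoc_inv h g f); split; [apply: (assoc_inv_l _ L) | apply: (assoc_inv_r _ L)]. Qed.

Lemma runit_invertible {a b : ob B} (f : hom a b) : is_invertible (runit f).
Proof. by exists (runit_inv f); split; [apply: (runit_inv_l _ L) | apply: (runit_inv_r _ L)]. Qed.

Lemma runit_inv_invertible {a b : ob B} (f : hom a b) : is_invertible (runit_inv f).
Proof. by exists (runit f); split; [apply: (runit_inv_r _ L) | apply: (runit_inv_l _ L)]. Qed.

Lemma rwhisk_id1_inj {a b : ob B} {f g : hom a b} (p q : cell f g) :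
  p ▹ id1 a = q ▹ id1 a -> p = q.
Proof.
move=> pq; apply: (invertible_cancel_l (runit g)); first exact: runit_invertible.
by rewrite (runit_nat _ L) pq -(runit_nat _ L).
Qed.

Lemma lwhisk_lunit_assoc {a b c : ob B} (g : hom b c) (f : hom a b) :
  (g ◃ lunit f) ∘ assoc g (id1 b) f = runit_inv g ▹ f.
Proof.
rewrite -[LHS]vcomp_id2 -(id2_rwhisk _ L) -(runit_inv_r _ L _ _ g) -(rwhisk_vcomp _ L).
by rewrite vcompA (triangle _ L) id2_vcomp.
Qed.

Lemma runit_inv_comp1 {a b c : ob B} (f : hom b c) (g : hom a b) :
  runit_inv (f · g) = (f ◃ runit_inv g) ∘ assoc f g (id1 a).
Proof.
apply: rwhisk_id1_inj.
apply: (invertible_cancel_l (assoc f g (id1 a))); first exact: assoc_invertible.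
rewrite -(lwhisk_lunit_assoc (f · g) (id1 a)) vcompA (assoc_nat_r _ L).
rewrite -vcompA (pentagon _ L) !vcompA (lwhisk_vcomp _ L) (lwhisk_lunit_assoc g (id1 a)).
by rewrite -(assoc_nat_m _ L) -(rwhisk_vcomp _ L) vcompA.
Qed.

Lemma assoc_runit {a b c : ob B} (f : hom b c) (g : hom a b) :
  assoc f g (id1 a) ∘ runit (f · g) = f ◃ runit g.
Proof.
apply: (invertible_cancel_l (f ◃ runit_inv g)).
  exact/lwhisk_invertible/runit_inv_invertible.
rewrite (lwhisk_vcomp _ L) (runit_inv_l _ L) (lwhisk_id2 _ L) vcompA -runit_inv_comp1.
exact: (runit_inv_l _ L).
Qed.

End BicategoryFacts.

Section AlgebraAxioms.
Variables (B : bicat) (w : warping B) (Al : alg_data w).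
Let L := bc_laws B.

Lemma aE2_inj (he0_inv : forall (Y : ob B) (a : hom Y (aA Al)), is_invertible (ae0 Al a))
    (Y : ob B) (b c : hom Y (aA Al)) (p q : cell b c) :
  aE2 Al p = aE2 Al q -> p = q.
Proof.
move=> Ep_Eq; apply: (invertible_cancel_l B (ae0 Al c)); first exact: he0_inv.
by rewrite !(ae0_nat _ Al) Ep_Eq.
Qed.

Definition ae_unit {X Y : ob B} (a : hom Y (aA Al)) (x : hom X (wD w Y)) :
    cell (aE Al (aE Al a · (wT w x · wK w X))) (aE Al a · (wT w x · id1 (wD w X))) :=
  (aE Al a ◃ (wT w x ◃ wv0 w X)) ∘ (aE Al a ◃ wv w x (wK w X)) ∘ ae Al a (wT w x · wK w X).

Lemma ae_unit_invertible
    (he_inv : forall (X Y : ob B) (a : hom Y (aA Al)) (x : hom X (wD w Y)),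
      is_invertible (ae Al a x))
    {X Y : ob B} (a : hom Y (aA Al)) (x : hom X (wD w Y)) :
  is_invertible (ae_unit a x).
Proof.
apply: vcomp_invertible; last exact: he_inv.
apply: vcomp_invertible; apply: lwhisk_invertible; last exact: wv_inv.
exact/lwhisk_invertible/wv0_inv.
Qed.

Lemma ae_unit_E_lwhisk_k {X Y : ob B} (a : hom Y (aA Al)) (x : hom X (wD w Y)) :
  ae_unit a x ∘ aE2 Al (aE Al a ◃ wk w x)
  = assoc _ _ _ ∘ runit (aE Al a · wT w x) ∘ ae Al a x.
Proof.
rewrite /ae_unit -vcompA (ae_nat_x _ Al) !vcompA !(lwhisk_vcomp _ L) (W2 _ w).
by rewrite -assoc_runit.
Qed.

Lemma ae_unit_E_A3_lhs (hA1 : alg_A1 Al) (hA2 : alg_A2 Al)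
    {X Y : ob B} (a : hom Y (aA Al)) (x : hom X (wD w Y)) :
  ae_unit a x ∘ aE2 Al (assoc _ _ _ ∘ (ae Al a x ▹ wK w X) ∘ ae0 Al (aE Al a · x))
  = assoc _ _ _ ∘ runit (aE Al a · wT w x) ∘ ae Al a x.
Proof.
rewrite /ae_unit !(aE2_comp _ Al) !vcompA.
have := f_equal (fun c => (aE Al a ◃ (wT w x ◃ wv0 w X)) ∘ c) (hA1 X X Y a x (wK w X)).
rewrite /= !vcompA => <-.
rewrite -(assoc_nat_r _ L) -[_ ∘ (ae Al a x ▹ _)]vcompA (vcomp_whisk _ L) vcompA.
have A2 := hA2 X (aE Al a · x); rewrite -vcompA in A2.
by rewrite -!vcompA A2 (runit_nat _ L).
Qed.

End AlgebraAxioms.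

Theorem mainTheorem3 (B : bicat) (w : warping B) (Al : alg_data w)
  (he_inv : forall (X Y : ob B) (a : hom Y (aA Al)) (x : hom X (wD w Y)),
      is_invertible (ae Al a x))
  (he0_inv : forall (Y : ob B) (a : hom Y (aA Al)), is_invertible (ae0 Al a))
  (hA1 : alg_A1 Al) (hA2 : alg_A2 Al) : alg_A3 Al.
Proof.
move=> X Y a x; apply: (aE2_inj _ _ _ he0_inv).
apply: (invertible_cancel_l B (ae_unit _ _ _ a x)); first exact: ae_unit_invertible.
by rewrite ae_unit_E_A3_lhs // ae_unit_E_lwhisk_k.
Qed.
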